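(* Let $\mathfrak{F}=\langle W,\{W_{\mathfrak{d}^{\alpha_i}_j}\},\{W_{\mathfrak{e}^{\alpha_i}}\},R_\Box,R_{\mathsf{A}},R_\blacksquare,R_{\mathsf{H}}\rangle$ be any $\mathsf{TLAE}$-frame. Then for every $w\in W$: $(w,w)\notin R_\blacksquare$, $(w,w)\notin R_\Box$, $(w,w)\notin R_{\mathsf{H}}$, and $(w,w)\notin R_{\mathsf{A}}$.
   Context: Fix finite sets $\mathtt{Action}=\{\delta_1,\dots,\delta_n\}$ (atomic action types) and $\mathtt{Agent}=\{\alpha_1,\dots,\alpha_m\}$ (agents). The set $\mathtt{Action}^*$ of action types is generated by $\Delta::=\delta_j\mid\Delta\cup\Delta\mid\overline{\Delta}$. For each agent $\alpha_i$ and each $j$ there is a propositional constant $\mathfrak{d}^{\alpha_i}_j$ and for each agent $\alpha_i$ a propositional constant $\mathfrak{e}^{\alpha_i}$. The translation $t$ is: $t(\delta_j^{\alpha_i})=\mathfrak{d}^{\alpha_i}_j$, $t(\overline{\Delta}^{\alpha_i})=\neg t(\Delta^{\alpha_i})$, $t(\Delta^{\alpha_i}\cup\Gamma^{\alpha_k})=t(\Delta^{\alpha_i})\vee t(\Gamma^{\alpha_k})$. An $\mathcal{L}$-frame is a tuple $\langle W,\{W_{\mathfrak{d}^{\alpha_i}_j}\}_{i,j},\{W_{\mathfrak{e}^{\alpha_i}}\}_{i},R_\Box,R_{\mathsf{A}},R_\blacksquare,R_{\mathsf{H}}\rangle$ where $W$ is a set of moments, each $W_{\mathfrak{d}^{\alpha_i}_j},W_{\mathfrak{e}^{\alpha_i}}\subseteq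 W$, and $R_\Box,R_{\mathsf{A}},R_\blacksquare,R_{\mathsf{H}}$ are binary relations on $W$. For action types define $W_{t(\delta_j^{\alpha_i})}=W_{\mathfrak{d}^{\alpha_i}_j}$, $W_{t(\overline{\Delta}^{\alpha_i})}=W\setminus W_{t(\Delta^{\alpha_i})}$, $W_{t(\Delta^{\alpha_i}\cup\Gamma^{\alpha_k})}=W_{t(\Delta^{\alpha_i})}\cup W_{t(\Gamma^{\alpha_k})}$. A $\mathsf{TLAE}$-frame is an $\mathcal{L}$-frame satisfying: (pA3) if $R_{\mathsf{A}}wu$ and $R_{\mathsf{A}}wv$ then $u=v$; (pA4) if $R_{\mathsf{A}}wu$ then $R_\Box wu$; (pA5) for every $w$, all pairwise distinct agents $\alpha_{1},\dots,\alpha_{k}$ and (not necessarily distinct) $\Delta_1,\dots,\Delta_k\in\mathtt{Action}^*$: if for each $i$ there is $u_i$ with $R_\Box wu_i$ and $u_i\in W_{t(\Delta_i^{\alpha_i})}$, then there is $v$ with $R_\Box wv$ and $v\in W_{t(\Delta_1^{\alpha_1})}\cap\dots\cap W_{t(\Delta_k^{\alpha_k})}$; (pA6) for every $w$ and agent $\alpha_i$: if some $v$ with $R_\Box wv$ lies in $W_{\mathfrak{e}^{\alpha_i}}$, then some $u$ with $R_\Box wu$ lies outside $W_{\mathfrak{e}^{\alpha_i}}$; (pA10;A11) $R_\Box wv$ iff $R_\blacksquare vw$; (pA12) if $R_\blacksquare wu$ and $R_\blacksquare wv$ then $u=v$; (pA9;A14) $R_{\mathsf{H}}$ is the transitive closure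 of $R_\blacksquare$; (pA13) for every $w$, either there is no $v$ with $R_{\mathsf{H}}wv$, or there is $u$ with $R_{\mathsf{H}}wu$ such that there is no $z$ with $R_{\mathsf{H}}uz$. *)

From mathcomp Require Import all_boot.
From Stdlib Require Import Relations.
From Stdlib Require List.
Set Implicit Arguments. Unset Strict Implicit. Unset Printing Implicit Defensive.

Inductive actType (n : nat) : Type :=
  | AAtom : 'I_n -> actType n
  | AUnion : actType n -> actType n -> actType n
  | ACompl : actType n -> actType n.

(* An L-frame for n atomic action types and m agents.  Subsets of W are
   predicates W -> Prop; relations are W -> W -> Prop. *)
Record LFrame (n m : nat) : Type := {
  W : Type;
  Wd : 'I_m -> 'I_n -> W -> Prop;
  We : 'I_m -> W -> Prop;
  RBox : W -> W -> Prop;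
  RA : W -> W -> Prop;
  RBlack : W -> W -> Prop;
  RH : W -> W -> Prop
}.
Arguments W {n m} l.
Arguments Wd {n m} l _ _ _.
Arguments We {n m} l _ _.
Arguments RBox {n m} l _ _.
Arguments RA {n m} l _ _.
Arguments RBlack {n m} l _ _.
Arguments RH {n m} l _ _.

Fixpoint actSet n m (F : LFrame n m) (a : 'I_m) (D : actType n) : W F -> Prop :=
  match D with
  | AAtom j => Wd F a j
  | AUnion D1 D2 => fun w => @actSet n m F a D1 w \/ @actSet n m F a D2 w
  | ACompl D1 => fun w => ~ @actSet n m F a D1 w
  end.
Arguments actSet {n m} F a D _.

Definition TLAE_frame n m (F : LFrame n m) : Prop :=
  (forall w u v, RA F w u -> RA F w v -> u = v) /\
  (forall w u, RA F w u -> RBox F w u) /\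
  (forall (w : W F) (s : seq ('I_m * actType n)),
      0 < size s -> uniq (map fst s) ->
      (forall p, Stdlib.Lists.List.In p s -> exists u, RBox F w u /\ actSet F p.1 p.2 u) ->
      exists v, RBox F w v /\ (forall p, Stdlib.Lists.List.In p s -> actSet F p.1 p.2 v)) /\
  (forall (w : W F) (a : 'I_m),
      (exists v, RBox F w v /\ We F a v) -> exists u, RBox F w u /\ ~ We F a u) /\
  (forall w v, RBox F w v <-> RBlack F v w) /\
  (forall w u v, RBlack F w u -> RBlack F w v -> u = v) /\
  (forall w v, RH F w v <-> clos_trans (W F) (RBlack F) w v) /\
  (forall w, (forall v, ~ RH F w v) \/
             exists u, RH F w u /\ forall z, ~ RH F u z).

From mathcomp Require Import all_boot.
From Stdlib Require Import Relations.

Set Implicit Arguments.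
Unset Strict Implicit.

(* Since [R_black] is functional (pA12), a moment lying on an [R_H]-cycle has
   a unique future, which runs round the cycle forever; so no [R_H]-successor of
   it is [R_H]-final, contradicting pA13. Irreflexivity of [R_black], [R_Box]
   and [R_A] then follows from [R_black ⊆ R_H], pA10;A11 and pA4. *)

Section FunctionalCycle.

Variables (A : Type) (R : relation A).
Hypothesis R_functional : forall w u v, R w u -> R w v -> u = v.

Lemma clos_trans_functional_succ w u v :
  clos_trans A R w v -> R w u -> u = v \/ clos_trans A R u v.
Proof.
move=> /clos_trans_t1n_iff [c Rwc | c v' Rwc /clos_trans_t1n_iff cv] Rwu.
- by left; apply: R_functional Rwu Rwc.
- by right; rewrite (R_functional Rwu Rwc).
Qed.

Lemma clos_trans_cycle_step w u :
  clos_trans A R w w -> R w u -> clos_trans A R u w.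
Proof.
move=> cycle_w Rwu.
case: (clos_trans_functional_succ cycle_w Rwu) => [uw | //].
by subst u; apply: t_step.
Qed.

Lemma clos_trans_cycle_return w x :
  clos_trans A R w w -> clos_trans A R w x -> clos_trans A R x w.
Proof.
move=> cycle_w /clos_trans_tn1_iff wx.
elim: wx => [y Rwy | y z Ryz wy yw].
- exact: clos_trans_cycle_step Rwy.
- have cycle_y : clos_trans A R y y.
    by apply: t_trans yw _; apply/clos_trans_tn1_iff.
  exact: t_trans (clos_trans_cycle_step cycle_y Ryz) yw.
Qed.

End FunctionalCycle.

Lemma TLAE_RH_irrefl n m (F : LFrame n m) :
  TLAE_frame F -> forall w : W F, ~ RH F w w.
Proof.
move=> [_ [_ [_ [_ [_ [black_functional [RH_clos final_exists]]]]]]] w Hww.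
case: (final_exists w) => [no_succ | [u [Hwu u_final]]].
- exact: no_succ Hww.
- have cycle_w := (RH_clos w w).1 Hww.
  have return_uw :=
    clos_trans_cycle_return black_functional cycle_w ((RH_clos w u).1 Hwu).
  exact: u_final w ((RH_clos u w).2 return_uw).
Qed.

Theorem mainTheorem1 (n m : nat) (F : LFrame n m) :
  TLAE_frame F ->
  forall w : W F,
    ~ RBlack F w w /\ ~ RBox F w w /\ ~ RH F w w /\ ~ RA F w w.
Proof.
move=> frameF w.
have noRH : ~ RH F w w by apply: TLAE_RH_irrefl.
case: frameF => [_ [A_sub_Box [_ [_ [Box_conv [_ [RH_clos _]]]]]]].
have noBlack : ~ RBlack F w w by move=> Bww; apply/noRH/RH_clos/t_step.
have noBox : ~ RBox F w w by move/Box_conv.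
by split; [|split; [|split]] => // /A_sub_Box.
Qed.
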